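(* There exists a $10$-ary $3$-frameproof code of length $5$ and cardinality $135$ satisfying Property $P(2)$.
   Context: For $P\subseteq F^l$ over a finite alphabet $F$, $desc(P)=\{x\in F^l: \text{for every } i \text{ there is } y\in P \text{ with } x_i=y_i\}$. For an integer $c\geq 2$, a $c$-frameproof code is a subset $C\subseteq F^l$ with $desc(P)\cap C=P$ for every $P\subseteq C$ with $|P|\leq c$; it is $q$-ary if $|F|=q$. A $c$-frameproof code $C$ over an alphabet $S$ satisfies Property $P(t)$ if there is a special element $\infty\in S$ such that every codeword has at most $t-1$ coordinates equal to $\infty$ and any two codewords that agree in $t$ coordinates where their common value is not $\infty$ are equal. *)

From mathcomp Require Import all_boot.
Set Implicit Arguments. Unset Strict Implicit. Unset Printing Implicit Defensive.

Definition word (F : finType) (l : nat) := {ffun 'I_l -> F}.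

Definition desc (F : finType) (l : nat) (P : {set word F l}) : {set word F l} :=
  [set x : word F l | [forall i : 'I_l, [exists y in P, x i == y i]]].

Definition frameproof (F : finType) (l c : nat) (C : {set word F l}) : Prop :=
  forall P : {set word F l}, P \subset C -> #|P| <= c -> desc P :&: C = P.

Definition propertyP (F : finType) (l t : nat) (C : {set word F l}) : Prop :=
  exists inf : F,
    (forall x, x \in C -> #|[set i : 'I_l | x i == inf]| <= t - 1) /\
    (forall x y, x \in C -> y \in C ->
       (exists I : {set 'I_l}, #|I| = t /\
          forall i, i \in I -> x i = y i /\ x i != inf) ->
       x = y).

(* If every codeword has at most t - 1 coordinates equal to infinity and two distinct
   codewords agree in at most t - 1 ordinary coordinates, then a codeword x outside a
   coalition P lies in desc(P) only if each of its at least l - (t - 1) ordinary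
   coordinates is inherited from a member of P, each member supplying at most t - 1 of
   them; so c * (t - 1) < l - (t - 1) forces c-frameproofness.  For l = 5, t = 2, c = 3
   this reads 3 < 4, and it remains to exhibit 135 words of length 5 over 10 symbols
   with property P(2), which is checked by computation. *)

From mathcomp Require Import all_boot zify.
Set Implicit Arguments. Unset Strict Implicit. Unset Printing Implicit Defensive.

Lemma card_bigcup_le (I T : finType) (P : {pred I}) (A : I -> {set T}) :
  #|\bigcup_(i in P) A i| <= \sum_(i in P) #|A i|.
Proof.
elim/big_rec2: _ => [|i n U _ IH]; first by rewrite cards0.
by rewrite (leq_trans (leq_card_setU _ _)) // leq_add2l.
Qed.

Section PropertyP.

Variables (F : finType) (l : nat).
Implicit Types (C : {set word F l}) (x y : word F l) (inf : F).

Definition agreement inf x y : {set 'I_l} :=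
  [set i | (x i == y i) && (x i != inf)].

Lemma propertyP_agreementP C t :
  propertyP t C <->
  exists inf : F,
    (forall x, x \in C -> #|[set i | x i == inf]| <= t - 1) /\
    (forall x y, x \in C -> y \in C -> x != y -> #|agreement inf x y| < t).
Proof.
split=> -[inf [inf_le agree]]; exists inf; split=> // x y xC yC.
- apply: contraNT; rewrite -leqNgt => /card_geqP [s [s_uniq s_size s_agree]].
  apply/eqP/agree => //; exists [set i in s]; split.
    by rewrite cardsE (card_uniqP s_uniq).
  by move=> i; rewrite inE => /s_agree; rewrite inE => /andP [/eqP].
- case=> I [I_card I_agree]; apply/eqP/contraT => /(agree x y xC yC).
  rewrite ltnNge -I_card subset_leq_card //.
  by apply/subsetP => i /I_agree [xy xi]; rewrite inE xy eqxx -xy xi.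
Qed.

Lemma frameproof_of_agreement C inf c m d :
  (forall x, x \in C -> m <= #|[set i | x i != inf]|) ->
  (forall x y, x \in C -> y \in C -> x != y -> #|agreement inf x y| <= d) ->
  c * d < m -> frameproof c C.
Proof.
move=> x_big agree cdm P PC Pc; apply/setP => x; rewrite inE.
apply/andP/idP => [[xd xC]|xP]; last first.
  split; last exact: subsetP PC x xP.
  by rewrite inE; apply/forallP => i; apply/existsP; exists x; rewrite xP eqxx.
apply: contraTT cdm => xP; rewrite -leqNgt.
have cover : [set i | x i != inf] \subset \bigcup_(y in P) agreement inf x y.
  apply/subsetP => i; rewrite inE => xi.
  move: xd; rewrite inE => /forallP/(_ i)/existsP [y /andP [yP /eqP xy]].
  by apply/bigcupP; exists y; rewrite // inE xy eqxx -xy xi.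
apply: leq_trans (x_big x xC) _; apply: leq_trans (subset_leq_card cover) _.
apply: leq_trans (card_bigcup_le _ _) _.
rewrite (leq_trans (@leq_sum _ _ _ _ (fun=> d) _)) //.
  move=> y yP; apply: agree => //; first exact: subsetP PC y yP.
  by apply: contraNneq xP => ->.
by rewrite sum_nat_const leq_mul2r Pc orbT.
Qed.

Lemma propertyP_frameproof C t c :
  propertyP t C -> c * (t - 1) < l - (t - 1) -> frameproof c C.
Proof.
case/propertyP_agreementP => inf [inf_le agree] ctl.
apply: (frameproof_of_agreement (inf := inf) (m := l - (t - 1)) _ _ ctl)
  => [x xC | x y xC yC xy].
  have := cardsC [set i | x i != inf]; rewrite card_ord.
  have -> : ~: [set i | x i != inf] = [set i | x i == inf].
    by apply/setP => i; rewrite !inE negbK.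
  by have := inf_le x xC; lia.
by have := agree x y xC yC xy; lia.
Qed.

End PropertyP.

Lemma card_ord_count n (P : pred nat) : #|[set i : 'I_n | P i]| = count P (iota 0 n).
Proof. by rewrite cardsE cardE -val_enum_ord count_map /enum_mem size_filter filter_predT. Qed.

(* Symbols are encoded as the naturals 0..9, with 9 playing the role of infinity.  The
   code is the orbit of the nine words (a, b, 3 + (a - b), a + b, oo), a b in Z/3, under
   [twist], which rotates a word right and adds 3 mod 9 to the symbol that wraps around;
   [twist] has order 15. *)
Definition add3 (s : nat) : nat := if s == 9 then 9 else (s + 3) %% 9.

Definition twist (r : seq nat) : seq nat :=
  if r is [:: a; b; c; d; e] then [:: add3 e; a; b; c; d] else r.

Definition base_row (a b : nat) : seq nat :=
  [:: a; b; 3 + (a + 2 * b) %% 3; (a + b) %% 3; 9].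

Definition rows : seq (seq nat) :=
  [seq iter k twist r | k <- iota 0 15, r <- [seq base_row a b | a <- iota 0 3, b <- iota 0 3]].

Definition inftys (r : seq nat) : pred nat := fun i => nth 0 r i == 9.

Definition agree_rows (r r' : seq nat) : pred nat :=
  fun i => (nth 0 r i == nth 0 r' i) && (nth 0 r i != 9).

Lemma size_rows : size rows = 135.
Proof. by vm_compute. Qed.

Lemma rows_uniq : uniq rows.
Proof. by vm_compute. Qed.

Lemma rows_wf : all (fun r => (size r == 5) && all (gtn 10) r) rows.
Proof. by vm_compute. Qed.

Lemma rows_inftys : all (fun r => count (inftys r) (iota 0 5) <= 1) rows.
Proof. by vm_compute. Qed.

Lemma rows_agree :
  all (fun r => all (fun r' => (r == r') || (count (agree_rows r r') (iota 0 5) < 2)) rows) rows.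
Proof. by vm_compute. Qed.

Definition word_of (r : seq nat) : word 'I_10 5 := [ffun i : 'I_5 => inord (nth 0 r i)].

Definition code : {set word 'I_10 5} := [set x in map word_of rows].

Definition infty : 'I_10 := ord_max.

Lemma codeP x : reflect (exists2 r, r \in rows & x = word_of r) (x \in code).
Proof. by rewrite inE; apply: mapP. Qed.

Lemma val_word_of r (i : 'I_5) : r \in rows -> val (word_of r i) = nth 0 r i.
Proof.
move=> r_rows; rewrite ffunE /= inordK //.
have /andP [_ /allP r_small] := allP rows_wf r r_rows.
by case: (ltnP i (size r)) => [/(mem_nth 0)/r_small | /(nth_default 0) ->].
Qed.

Lemma word_of_inj : {in rows &, injective word_of}.
Proof.
move=> r r' r_rows r'_rows eq_rr'.
have /andP [/eqP size_r _] := allP rows_wf r r_rows.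
have /andP [/eqP size_r' _] := allP rows_wf r' r'_rows.
apply: (@eq_from_nth _ 0) => [|i]; first by rewrite size_r size_r'.
rewrite size_r => lt_i5.
by rewrite -[i]/(Ordinal lt_i5 : nat) -!val_word_of // eq_rr'.
Qed.

Lemma card_code : #|code| = 135.
Proof.
rewrite cardsE (card_uniqP _) ?size_map ?size_rows //.
by rewrite (map_inj_in_uniq word_of_inj) rows_uniq.
Qed.

Lemma code_propertyP : propertyP 2 code.
Proof.
apply/propertyP_agreementP; exists infty; split=> [x | x y].
  case/codeP=> r r_rows ->.
  have -> : [set i | word_of r i == infty] = [set i : 'I_5 | inftys r i].
    by apply/setP => i; rewrite !inE -val_eqE /= val_word_of.
  by rewrite card_ord_count (allP rows_inftys).
move=> /codeP [r r_rows ->] /codeP [r' r'_rows ->] neq_rr'.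
have -> : agreement infty (word_of r) (word_of r') = [set i : 'I_5 | agree_rows r r' i].
  by apply/setP => i; rewrite !inE -!val_eqE /= !val_word_of.
rewrite card_ord_count.
have /orP [/eqP eq_rr' | //] := allP (allP rows_agree r r_rows) r' r'_rows.
by rewrite eq_rr' eqxx in neq_rr'.
Qed.

Theorem lemma4 :
  exists (F : finType) (C : {set word F 5}),
    #|F| = 10 /\ #|C| = 135 /\ frameproof 3 C /\ propertyP 2 C.
Proof.
exists ('I_10 : finType), code; split; first exact: card_ord.
split; first exact: card_code.
by split; [apply: propertyP_frameproof code_propertyP _ | exact: code_propertyP].
Qed.
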